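(* Consider an $(M,K)$ product broadcast channel with one sender, $K$ intended receivers and one eavesdropper. For $j=1,\dots,M$ let $\mathcal{P}_j$ be the set of all conditional distributions $p'(y_{1j},\dots,y_{Kj},y_{ej}\mid x_j)$ whose conditional marginals $p'(y_{ij}\mid x_j)$ ($i=1,\dots,K$) and $p'(y_{ej}\mid x_j)$ coincide with those of the true channel $j$, and let $\mathcal{P}=\mathcal{P}_1\times\cdots\times\mathcal{P}_M$. Then the common-message-secrecy-capacity $C$ satisfies $$C\le \min_{\mathcal{P}}\ \max_{\prod_{j=1}^M p(x_j)}\ \min_{i\in\{1,\dots,K\}}\ \sum_{j=1}^M I(X_j;Y_{ij}\mid Y_{ej}),$$ where the outer minimum is over $(p'_1,\dots,p'_M)\in\mathcal{P}$, the maximum is over product input distributions, and each mutual information is evaluated under the joint distribution $p(x_j)\,p'_j(y_{1j},\dots,y_{Kj},y_{ej}\mid x_j)$.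
   Context: An $(M,K)$ product broadcast channel: one sender, $K$ intended receivers, one eavesdropper (index $e$), and $M$ parallel channels with finite input alphabet $\mathcal{X}$ and finite output alphabet $\mathcal{Y}$, memoryless and mutually independent: $\Pr(\{y_{1j}^n,\dots,y_{Kj}^n,y_{ej}^n\}_{j=1}^M\mid\{x_j^n\}_{j=1}^M)=\prod_{j=1}^M\prod_{t=1}^n \Pr(y_{1j}(t),\dots,y_{Kj}(t),y_{ej}(t)\mid x_j(t))$. Here $x_j^n$ is the input sequence on channel $j$ and $y_{ij}^n$ the output of receiver $i$ (or eavesdropper $i=e$) on channel $j$. An $(n,2^{nR})$ code consists of a message set $\{1,\dots,2^{nR}\}$, a possibly stochastic encoder mapping a message $W$ to $(x_1^n,\dots,x_M^n)\in(\mathcal{X}^n)^M$, and decoders $\Phi_{i,n}:(\mathcal{Y}^n)^M\to\{1,\dots,2^{nR}\}$ producing $\hat W_i$ from $(y_{i1}^n,\dots,y_{iM}^n)$, $i=1,\dots,K$. A rate $R$ is an achievable common-message-secrecy-rate if for every $\varepsilon>0$ there is a length-$n$ code with $\Pr(W\neq\hat W_i)\le\varepsilon$ for all $i$ and $\frac1n H(W\mid Y_{e1}^n,\dots,Y_{eM}^n)\ge R-\varepsilon$. The common-message-secrecy-capacity is the supremum of achievable rates. *)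

From HB Require Import structures.
From mathcomp Require Import all_boot all_order all_algebra.
From mathcomp Require Import all_classical all_reals.
From mathcomp Require Import all_analysis.
Set Implicit Arguments. Unset Strict Implicit. Unset Printing Implicit Defensive.
Import Order.TTheory GRing.Theory Num.Theory.
Local Open Scope ring_scope.

Section InfoTheory.
Variable R : realType.

Definition log2 (x : R) : R := ln x / ln 2.

Definition is_pmf (T : finType) (p : T -> R) : Prop :=
  (forall t, 0 <= p t) /\ \sum_(t : T) p t = 1.

Definition entropy (T : finType) (p : T -> R) : R :=
  - \sum_(t : T) (if 0 < p t then p t * log2 (p t) else 0).

(** conditional mutual information I(X;Y|Z) = H(X|Z) - H(X|Y,Z)
    = H(X,Z) + H(Y,Z) - H(X,Y,Z) - H(Z)
    for a joint pmf q on X * Y * Z *)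
Definition condMI (X Y Z : finType) (q : X * Y * Z -> R) : R :=
  let qXZ := fun xz : X * Z => \sum_(y : Y) q (xz.1, y, xz.2) in
  let qYZ := fun yz : Y * Z => \sum_(x : X) q (x, yz.1, yz.2) in
  let qZ  := fun z : Z => \sum_(x : X) \sum_(y : Y) q (x, y, z) in
  entropy qXZ + entropy qYZ - entropy q - entropy qZ.

Definition condEntropy (A B : finType) (q : A * B -> R) : R :=
  entropy q - entropy (fun b : B => \sum_(a : A) q (a, b)).

(** Output of one channel use on sub-channel j: a vector indexed by
    [option 'I_K]; [Some i] is receiver i (0-based), [None] is the
    eavesdropper e. *)
Definition outv (K : nat) (Y : finType) := {ffun option 'I_K -> Y}.

Definition is_channel (M K : nat) (X Y : finType)
  (W : 'I_M -> X -> outv K Y -> R) : Prop :=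
  forall j x, is_pmf (W j x).

Definition cmarg (K : nat) (X Y : finType) (V : X -> outv K Y -> R)
  (k : option 'I_K) (x : X) (b : Y) : R :=
  \sum_(y : outv K Y | y k == b) V x y.

Definition same_marginals (M K : nat) (X Y : finType)
  (W P' : 'I_M -> X -> outv K Y -> R) : Prop :=
  is_channel P' /\
  forall j k x b, cmarg (P' j) k x b = cmarg (W j) k x b.

Definition inblock (M n : nat) (X : finType) := {ffun 'I_M -> {ffun 'I_n -> X}}.
Definition outblock (M n K : nat) (Y : finType) :=
  {ffun 'I_M -> {ffun 'I_n -> outv K Y}}.
Definition obsblock (M n : nat) (Y : finType) := {ffun 'I_M -> {ffun 'I_n -> Y}}.

Definition observe (M n K : nat) (Y : finType) (k : option 'I_K)
  (y : outblock M n K Y) : obsblock M n Y :=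
  [ffun j => [ffun t => y j t k]].

Definition chan_n (M n K : nat) (X Y : finType) (W : 'I_M -> X -> outv K Y -> R)
  (x : inblock M n X) (y : outblock M n K Y) : R :=
  \prod_(j < M) \prod_(t < n) W j (x j t) (y j t).

(** number of messages of an (n, 2^{nR}) code: ceil(2^{nR}) *)
Definition msg_count (n : nat) (Rt : R) : nat :=
  `|Num.ceil (expR (n%:R * Rt * ln 2))|%N.

(** joint pmf of (W, X-block, Y-block) with W uniform on N messages,
    stochastic encoder enc w x = Pr(x | w) *)
Definition joint (M n K N : nat) (X Y : finType) (W : 'I_M -> X -> outv K Y -> R)
  (enc : 'I_N -> inblock M n X -> R) (w : 'I_N) (x : inblock M n X)
  (y : outblock M n K Y) : R :=
  N%:R^-1 * enc w x * chan_n W x y.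

Definition err_prob (M n K N : nat) (X Y : finType) (W : 'I_M -> X -> outv K Y -> R)
  (enc : 'I_N -> inblock M n X -> R) (dec : obsblock M n Y -> 'I_N) (i : 'I_K) : R :=
  \sum_(w : 'I_N) \sum_(x : inblock M n X) \sum_(y : outblock M n K Y |
        dec (observe (Some i) y) != w) joint W enc w x y.

Definition equivocation (M n K N : nat) (X Y : finType)
  (W : 'I_M -> X -> outv K Y -> R) (enc : 'I_N -> inblock M n X -> R) : R :=
  condEntropy (fun wz : 'I_N * obsblock M n Y =>
    \sum_(x : inblock M n X) \sum_(y : outblock M n K Y | observe None y == wz.2)
      joint W enc wz.1 x y).

Definition achievable (M K : nat) (X Y : finType)
  (W : 'I_M -> X -> outv K Y -> R) (Rt : R) : Prop :=
  forall eps : R, 0 < eps ->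
  exists n : nat, (0 < n)%N /\
  exists (enc : 'I_(msg_count n Rt) -> inblock M n X -> R)
         (dec : 'I_K -> obsblock M n Y -> 'I_(msg_count n Rt)),
    (forall w, is_pmf (enc w)) /\
    (forall i, err_prob W enc (dec i) i <= eps) /\
    n%:R^-1 * equivocation W enc >= Rt - eps.

Definition secrecy_capacity (M K : nat) (X Y : finType)
  (W : 'I_M -> X -> outv K Y -> R) : \bar R :=
  ereal_sup [set (Rt%:E)%E | Rt in [set Rt | achievable W Rt]].

Definition joint_j (K : nat) (X Y : finType) (p : X -> R) (V : X -> outv K Y -> R)
  (i : 'I_K) (xab : X * Y * Y) : R :=
  p xab.1.1 * \sum_(y : outv K Y | (y (Some i) == xab.1.2) && (y None == xab.2))
                V xab.1.1 y.

Definition bound_value (M K : nat) (X Y : finType) (P' : 'I_M -> X -> outv K Y -> R)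
  (p : 'I_M -> X -> R) : \bar R :=
  \big[Order.min/+oo%E]_(i < K) (\sum_(j < M) condMI (joint_j (p j) (P' j) i))%:E.

End InfoTheory.

(* Error probabilities and equivocation only involve the marginals p(y_ij | x_j)
   and p(y_ej | x_j), so a code performs identically on W and on any P' with the
   same marginals; it suffices to bound achievable rates of P'.  For a code with
   message W, codeword X, receiver outputs Y and eavesdropper outputs Z,
     H(W|Z) = H(W|Y,Z) + H(Y|Z) - H(Y|W,Z) <= H(W|Y) + H(Y|Z) - H(Y|X,W,Z).
   H(W|Y) is bounded by a Fano inequality whose constant term can be made
   arbitrarily small, as needed since achievability does not force the
   blocklength n to grow.  By memorylessness, H(Y|X,W,Z) is a sum of single-letter
   terms that is linear in the input law, hence equals n sum_j H(Y_j|X_j,Z_j) under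
   the time-averaged input laws; Gibbs' inequality against the product of the
   single-letter conditionals gives H(Y|Z) <= n sum_j H(Y_j|Z_j) for the same
   laws.  So H(W|Z) <= n sum_j I(X_j;Y_j|Z_j) plus the Fano term, for every
   receiver and at a single product input distribution. *)

From HB Require Import structures.
From mathcomp Require Import all_boot all_order all_algebra.
From mathcomp Require Import all_classical all_reals.
From mathcomp Require Import all_analysis.
From mathcomp Require Import ring lra.
Import Order.TTheory GRing.Theory Num.Theory.
Local Open Scope ring_scope.
Local Open Scope classical_set_scope.
Set Implicit Arguments. Unset Strict Implicit. Unset Printing Implicit Defensive.

(** * Entropy of random variables on a finite probability space *)

Section Entropy.
Variable R : realType.

Lemma ln_prod (I : finType) (F : I -> R) :
  (forall i, 0 < F i) -> ln (\prod_i F i) = \sum_i ln (F i).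
Proof.
move=> F_gt0; pose K (a b : R) := 0 < a /\ ln a = b.
suff [] : K (\prod_i F i) (\sum_i ln (F i)) by [].
apply: (big_rec2 K) => [|i a b _ [a_gt0 <-]]; first by split; [exact: ltr01 | exact: ln1].
by split; rewrite ?mulr_gt0 // lnM ?posrE.
Qed.

Lemma prodr_gt0_factor (I : finType) (F : I -> R) i :
  (forall i, 0 <= F i) -> 0 < \prod_i F i -> 0 < F i.
Proof.
move=> F_ge0; rewrite (bigD1 i) //=; have [->|Fi] := eqVneq (F i) 0.
  by rewrite mul0r ltxx.
by move=> _; rewrite lt_def Fi F_ge0.
Qed.

Lemma pmulr_gt0_factors (x y : R) : 0 <= x -> 0 <= y -> 0 < x * y -> 0 < x /\ 0 < y.
Proof.
rewrite !le_eqVlt => /predU1P[<-|x0]; first by rewrite mul0r ltxx.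
by case/predU1P => [<-|y0]; rewrite ?mulr0 ?ltxx.
Qed.

Lemma divr_self_le1 (x : R) : 0 <= x -> x / x <= 1.
Proof. by move=> x0; have [->|/mulfV->//] := eqVneq x 0; rewrite mul0r. Qed.

Lemma sum_pair (A B : finType) (F : A * B -> R) :
  \sum_t F t = \sum_a \sum_b F (a, b).
Proof. by rewrite pair_bigA; apply: eq_bigr => -[]. Qed.

Lemma sum_triple (A B C : finType) (F : A * B * C -> R) :
  \sum_t F t = \sum_a \sum_b \sum_c F (a, b, c).
Proof. by rewrite 2!sum_pair. Qed.

Definition push (T U : finType) (Q : T -> R) (f : T -> U) (u : U) : R :=
  \sum_(t | f t == u) Q t.

Definition Hln (T : finType) (p : T -> R) : R := - \sum_t p t * ln (p t).

Definition rv_entropy (T U : finType) (Q : T -> R) (f : T -> U) : R := Hln (push Q f).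

Definition rv_centropy (T U V : finType) (Q : T -> R) (f : T -> U) (g : T -> V) : R :=
  rv_entropy Q (fun t => (f t, g t)) - rv_entropy Q g.

Lemma ln2_gt0 : 0 < ln (2 : R).
Proof. by rewrite ln_gt0 // ltr1n. Qed.

Lemma entropyE (T : finType) (p : T -> R) :
  (forall t, 0 <= p t) -> entropy p = Hln p / ln 2.
Proof.
move=> p_ge0; rewrite /entropy /Hln mulNr mulr_suml; congr (- _).
apply: eq_bigr => t _; case: ifPn => [_|]; first by rewrite /log2 mulrA.
rewrite -leNgt => pt0; have -> : p t = 0 by apply/eqP; rewrite eq_le pt0 p_ge0.
by rewrite !mul0r.
Qed.

Lemma gibbs (T : finType) (Q b : T -> R) :
  (forall t, 0 <= Q t) -> \sum_t Q t = 1 ->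
  (forall t, 0 <= b t) -> \sum_t b t <= 1 -> (forall t, 0 < Q t -> 0 < b t) ->
  \sum_t Q t * ln (b t) <= \sum_t Q t * ln (Q t).
Proof.
move=> Q_ge0 Q_sum1 b_ge0 b_le1 Qb; rewrite -subr_ge0 -sumrB.
apply: le_trans (_ : 0 <= \sum_t (Q t - b t)) _; first by rewrite sumrB Q_sum1 subr_ge0.
apply: ler_sum => t _; have [Qt|Qt] := ltP 0 (Q t); last first.
  have -> : Q t = 0 by apply/eqP; rewrite eq_le Qt Q_ge0.
  by rewrite !mul0r subrr sub0r oppr_le0.
have : ln (b t / Q t) <= b t / Q t - 1.
  have := @le_ln1Dx R (b t / Q t - 1); rewrite [1 + _]addrC subrK; apply.
  by rewrite ltrBrDl subrr divr_gt0 ?Qb.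
rewrite -(ler_pM2l Qt) mulrBr mulr1 mulrCA mulfV ?gt_eqF // mulr1.
by rewrite ln_div ?posrE ?Qb // mulrBr; lra.
Qed.

Section Push.
Variables (T : finType) (Q : T -> R).
Hypothesis Q_ge0 : forall t, 0 <= Q t.

Lemma push_ge0 (U : finType) (f : T -> U) u : 0 <= push Q f u.
Proof. exact: sumr_ge0. Qed.

Lemma push_ge (U : finType) (f : T -> U) t : Q t <= push Q f (f t).
Proof. by rewrite /push (bigD1 t) //= lerDl sumr_ge0. Qed.

Lemma push_gt0 (U : finType) (f : T -> U) t : 0 < Q t -> 0 < push Q f (f t).
Proof. by move=> Qt; apply: lt_le_trans Qt (push_ge _ _). Qed.

Lemma push_gt0P (U : finType) (f : T -> U) u :
  0 < push Q f u -> exists2 t, f t = u & 0 < Q t.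
Proof.
move=> Pu; have [t /andP[/eqP ft Qt]|none] := pickP (fun t => (f t == u) && (0 < Q t)).
  by exists t.
suff : push Q f u = 0 by move=> P0; rewrite P0 ltxx in Pu.
apply: big1 => t ft; move/negbT: (none t); rewrite ft -leNgt => Qt.
by apply/eqP; rewrite eq_le Qt Q_ge0.
Qed.

Lemma expect_push (U : finType) (f : T -> U) (g : U -> R) :
  \sum_t Q t * g (f t) = \sum_u push Q f u * g u.
Proof.
rewrite (partition_big f predT) //=; apply: eq_bigr => u _.
by rewrite /push mulr_suml; apply: eq_bigr => t /eqP <-.
Qed.

Lemma sum_push (U : finType) (f : T -> U) : \sum_u push Q f u = \sum_t Q t.
Proof. by rewrite [RHS](partition_big f predT). Qed.

Lemma sum_push_fst (U V : finType) (A : T -> U) (B : T -> V) v :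
  \sum_u push Q (fun t => (A t, B t)) (u, v) = push Q B v.
Proof.
rewrite [RHS]/push (partition_big A predT) //=.
by apply: eq_bigr => u _; apply: eq_bigl => t; rewrite xpair_eqE andbC.
Qed.

Lemma push_relabel (U V : finType) (f : T -> U) (g : T -> V) t :
  (forall t t', (f t == f t') = (g t == g t')) -> push Q f (f t) = push Q g (g t).
Proof. by move=> fg; apply: eq_bigl => t'; rewrite fg. Qed.

Lemma push_inj (U : finType) (f : T -> U) t : injective f -> push Q f (f t) = Q t.
Proof.
by move=> f_inj; rewrite /push (eq_bigl (pred1 t)) ?big_pred1_eq // => t'; exact: inj_eq.
Qed.

Lemma eq_expect_supp (F G : T -> R) :
  (forall t, 0 < Q t -> F t = G t) -> \sum_t Q t * F t = \sum_t Q t * G t.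
Proof.
move=> FG; apply: eq_bigr => t _; have [/FG->//|Qt] := ltP 0 (Q t).
have -> : Q t = 0 by apply/eqP; rewrite eq_le Qt Q_ge0.
by rewrite !mul0r.
Qed.

Lemma rv_entropyE (U : finType) (f : T -> U) :
  rv_entropy Q f = - \sum_t Q t * ln (push Q f (f t)).
Proof. by rewrite /rv_entropy /Hln (expect_push f (fun u => ln (push Q f u))). Qed.

Lemma rv_entropy_relabel (U V : finType) (f : T -> U) (g : T -> V) :
  (forall t t', (f t == f t') = (g t == g t')) -> rv_entropy Q f = rv_entropy Q g.
Proof.
by move=> fg; rewrite !rv_entropyE; under eq_bigr do rewrite (push_relabel _ fg).
Qed.

Lemma rv_entropy_inj (U : finType) (f : T -> U) : injective f -> rv_entropy Q f = Hln Q.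
Proof. by move=> f_inj; rewrite rv_entropyE /Hln; under eq_bigr do rewrite (push_inj _ f_inj). Qed.

Lemma rv_centropyE (U V : finType) (f : T -> U) (g : T -> V) :
  rv_centropy Q f g =
  - \sum_t Q t * ln (push Q (fun t => (f t, g t)) (f t, g t) / push Q g (g t)).
Proof.
suff -> : \sum_t Q t * ln (push Q (fun t => (f t, g t)) (f t, g t) / push Q g (g t)) =
    \sum_t Q t * ln (push Q (fun t => (f t, g t)) (f t, g t)) - \sum_t Q t * ln (push Q g (g t)).
  by rewrite /rv_centropy !rv_entropyE; lra.
rewrite -sumrB; under [RHS]eq_bigr do rewrite -mulrBr.
apply: eq_expect_supp => t Qt.
by rewrite ln_div ?posrE ?(push_gt0 (fun t => (f t, g t))) ?push_gt0.
Qed.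

Lemma rv_centropy_chain (U V W : finType) (A : T -> U) (B : T -> V) (C : T -> W) :
  rv_centropy Q A C - rv_centropy Q A (fun t => (B t, C t))
  = rv_centropy Q B C - rv_centropy Q B (fun t => (A t, C t)).
Proof.
rewrite /rv_centropy (rv_entropy_relabel (f := fun t => (A t, (B t, C t)))
  (g := fun t => (B t, (A t, C t)))); first lra.
by move=> t t'; rewrite !xpair_eqE andbCA.
Qed.

Hypothesis Q_sum1 : \sum_t Q t = 1.

Lemma rv_centropy_le_cross (U V : finType) (A : T -> U) (B : T -> V) (r : U -> V -> R) :
  (forall u v, 0 <= r u v) -> (forall v, \sum_u r u v <= 1) ->
  (forall t, 0 < Q t -> 0 < r (A t) (B t)) ->
  rv_centropy Q A B <= - \sum_t Q t * ln (r (A t) (B t)).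
Proof.
move=> r_ge0 r_le1 Qr.
pose P := push Q (fun t => (A t, B t)).
pose b (uv : U * V) := push Q B uv.2 * r uv.1 uv.2.
have G : \sum_uv P uv * ln (b uv) <= \sum_uv P uv * ln (P uv).
  apply: gibbs.
  - by move=> uv; apply: push_ge0.
  - by rewrite sum_push.
  - by move=> uv; rewrite mulr_ge0 ?push_ge0.
  - rewrite -(pair_bigA _ (fun u v => b (u, v))) /= exchange_big /= -Q_sum1 -(sum_push B).
    apply: ler_sum => v _; rewrite /b /= -mulr_sumr -[leRHS]mulr1 ler_wpM2l ?push_ge0 //.
  - by move=> [u v] /push_gt0P[t [<- <-] Qt]; rewrite mulr_gt0 ?push_gt0 ?Qr.
rewrite -!(expect_push (fun t => (A t, B t))) in G.
have split_b : \sum_t Q t * ln (b (A t, B t)) =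
    \sum_t Q t * ln (push Q B (B t)) + \sum_t Q t * ln (r (A t) (B t)).
  rewrite -big_split /=; under [RHS]eq_bigr do rewrite -mulrDr.
  by apply: eq_expect_supp => t Qt; rewrite lnM ?posrE ?push_gt0 ?Qr.
rewrite /rv_centropy !rv_entropyE; lra.
Qed.

Lemma rv_centropy_le_coarsen (U V W : finType) (A : T -> U) (C : T -> W) (h : W -> V) :
  rv_centropy Q A C <= rv_centropy Q A (fun t => h (C t)).
Proof.
pose r u c := push Q (fun t => (A t, h (C t))) (u, h c) / push Q (fun t => h (C t)) (h c).
rewrite [leRHS]rv_centropyE; apply: (rv_centropy_le_cross (r := r)).
- by move=> u c; rewrite divr_ge0 ?push_ge0.
- by move=> c; rewrite -mulr_suml sum_push_fst divr_self_le1 ?push_ge0.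
- by move=> t Qt; rewrite divr_gt0 ?(push_gt0 (fun t => (A t, h (C t)))) ?push_gt0.
Qed.

(* The guessing kernel puts mass [1 - th] on the decoded message and spreads [th]
   uniformly over all messages. *)
Lemma fano (N : nat) (U : finType) (Wv : T -> 'I_N) (Yv : T -> U) (dec : U -> 'I_N) th :
  0 < th < 1 ->
  rv_centropy Q Wv Yv
  <= - ln (1 - th) + \sum_t Q t * (dec (Yv t) != Wv t)%:R * ln (N%:R / th).
Proof.
move=> /andP[th_gt0 th_lt1].
have [t0 _] : exists t : T, true.
  have [t _|none] := pickP (fun t : T => true); first by exists t.
  by move: Q_sum1; rewrite big_pred0 // => /esym/eqP; rewrite oner_eq0.
have N_gt0 : 0 < N%:R :> R by rewrite ltr0n; case: (Wv t0) => m; apply: leq_ltn_trans.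
pose r (w : 'I_N) (y : U) := if dec y == w then 1 - th else th / N%:R.
have r_gt0 w y : 0 < r w y by rewrite /r; case: ifP; rewrite ?subr_gt0 ?divr_gt0.
apply: le_trans (rv_centropy_le_cross (r := r) _ _ _) _.
- by move=> w y; apply: ltW.
- move=> y; apply: (@le_trans _ _ (\sum_w ((dec y == w)%:R * (1 - th) + th / N%:R))).
    apply: ler_sum => w _; rewrite /r; case: eqP => _; rewrite ?mul1r ?mul0r ?add0r //.
    by rewrite lerDl divr_ge0 // ltW.
  rewrite big_split /= sumr_const card_ord -[th / _ *+ _]mulr_natr divfK ?gt_eqF //.
  rewrite (bigD1 (dec y)) //= eqxx mul1r big1 ?addr0 ?subrK // => w /negbTE.
  by rewrite eq_sym => ->; rewrite mul0r.
- by move=> t _; apply: r_gt0.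
rewrite -sumrN; apply: (@le_trans _ _
  (\sum_t Q t * (- ln (1 - th) + (dec (Yv t) != Wv t)%:R * ln (N%:R / th)))).
  apply: ler_sum => t _; rewrite -mulrN ler_wpM2l // /r.
  case: eqVneq => _; first by rewrite mul0r addr0.
  rewrite mul1r -[- ln (th / _)]lnV ?posrE ?divr_gt0 // invf_div lerDr oppr_ge0 ln_le0 //.
  by rewrite gerBl ltW.
under eq_bigr do rewrite mulrDr mulrA.
by rewrite big_split /= -mulr_suml Q_sum1 mul1r.
Qed.

End Push.

Section Triple.
Variables (A B C : finType) (q : A * B * C -> R).

Lemma push_fst_snd a c : push q (fun t => (t.1.1, t.2)) (a, c) = \sum_b q (a, b, c).
Proof.
rewrite /push (reindex_onto (fun b => (a, b, c)) (fun t => t.1.2)) /=.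
  by apply: eq_bigl => b; rewrite !eqxx.
by move=> [[a' b'] c'] /eqP [-> ->].
Qed.

Lemma push_snd_snd b c : push q (fun t => (t.1.2, t.2)) (b, c) = \sum_a q (a, b, c).
Proof.
rewrite /push (reindex_onto (fun a => (a, b, c)) (fun t => t.1.1)) /=.
  by apply: eq_bigl => a; rewrite !eqxx.
by move=> [[a' b'] c'] /eqP [-> ->].
Qed.

Lemma push_snd c : push q snd c = \sum_a \sum_b q (a, b, c).
Proof.
rewrite /push (reindex_onto (fun ab : A * B => (ab.1, ab.2, c)) fst) /=.
  by rewrite pair_bigA; apply: eq_bigl => -[a b]; rewrite !eqxx.
by move=> [[a' b'] c'] /= /eqP ->.
Qed.

Lemma condMI_centropy : (forall t, 0 <= q t) ->
  condMI q * ln 2 = rv_centropy q (fun t => t.1.2) snd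
                    - rv_centropy q (fun t => t.1.2) (fun t => (t.1.1, t.2)).
Proof.
move=> q_ge0; rewrite /condMI /rv_centropy.
rewrite (rv_entropy_inj _ (f := fun t => (t.1.2, (t.1.1, t.2)))); last first.
  by move=> [[a b] c] [[a' b'] c'] [-> -> ->].
have -> : (fun ac => \sum_b q (ac.1, b, ac.2)) = push q (fun t => (t.1.1, t.2)).
  by apply/funext => -[a c]; rewrite push_fst_snd.
have -> : (fun bc => \sum_a q (a, bc.1, bc.2)) = push q (fun t => (t.1.2, t.2)).
  by apply/funext => -[b c]; rewrite push_snd_snd.
have -> : (fun c => \sum_a \sum_b q (a, b, c)) = push q snd.
  by apply/funext => c; rewrite push_snd.
rewrite /rv_entropy !entropyE //; try by move=> ?; apply: push_ge0.
have := ln2_gt0; set l := ln 2 => l_gt0.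
by field; rewrite gt_eqF.
Qed.

End Triple.
End Entropy.

(** * Memoryless product channels *)
Section ProductChannel.
Variable R : realType.

Lemma sum_ffun_prod (I J : finType) (F : I -> J -> R) (P : I -> pred J) :
  \sum_(f : {ffun I -> J} | [forall i, P i (f i)]) \prod_i F i (f i)
  = \prod_i \sum_(j | P i j) F i j.
Proof.
under [RHS]eq_bigr do rewrite big_mkcond.
rewrite bigA_distr_bigA /= [LHS]big_mkcond; apply: eq_bigr => f _.
case: forallP => [Pf|nPf]; first by apply: eq_bigr => i _; rewrite Pf.
have /existsP[i /negbTE Pi] : [exists i, ~~ P i (f i)].
  by rewrite -negb_forall; apply/forallP.
by rewrite (bigD1 i) //= Pi mul0r.
Qed.

Lemma sum_ffun2_prod (I1 I2 J : finType) (F : I1 -> I2 -> J -> R) (P : I1 -> I2 -> pred J) :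
  \sum_(f : {ffun I1 -> {ffun I2 -> J}} | [forall i, [forall k, P i k (f i k)]])
     \prod_i \prod_k F i k (f i k)
  = \prod_i \prod_k \sum_(j | P i k j) F i k j.
Proof.
rewrite (sum_ffun_prod (fun i (g : {ffun I2 -> J}) => \prod_k F i k (g k))
          (fun i g => [forall k, P i k (g k)])).
by apply: eq_bigr => i _; rewrite sum_ffun_prod.
Qed.

Lemma sum_ffun2_prodT (I1 I2 J : finType) (F : I1 -> I2 -> J -> R) :
  \sum_(f : {ffun I1 -> {ffun I2 -> J}}) \prod_i \prod_k F i k (f i k)
  = \prod_i \prod_k \sum_j F i k j.
Proof. by under [RHS]eq_bigr do rewrite bigA_distr_bigA; rewrite bigA_distr_bigA. Qed.

Variables (M K n : nat) (X Y : finType).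
Implicit Types (V : 'I_M -> X -> outv K Y -> R) (x : inblock M n X) (y : outblock M n K Y).

Lemma sum_chan_n V x (P : 'I_M -> 'I_n -> pred (outv K Y)) :
  \sum_(y : outblock M n K Y | [forall j, [forall t, P j t (y j t)]]) chan_n V x y
  = \prod_j \prod_t \sum_(u | P j t u) V j (x j t) u.
Proof.
exact: (sum_ffun2_prod (fun j t u => V j (x j t) u) P).
Qed.

Lemma chan_n_ge0 V x y : is_channel V -> 0 <= chan_n V x y.
Proof. by move=> V_ch; do 2 apply: prodr_ge0 => ? _; exact: (V_ch _ _).1. Qed.

Lemma chan_n_sum1 V x : is_channel V -> \sum_(y : outblock M n K Y) chan_n V x y = 1.
Proof.
move=> V_ch; transitivity (\prod_j \prod_t \sum_u V j (x j t) u).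
  exact: (sum_ffun2_prodT (fun j t u => V j (x j t) u)).
by do 2 apply: big1 => ? _; exact: (V_ch _ _).2.
Qed.

Definition letterwise (Z : finType) (phi : outv K Y -> Z) y :
  {ffun 'I_M -> {ffun 'I_n -> Z}} := [ffun j => [ffun t => phi (y j t)]].

Lemma letterwise_pair_eq (Z1 Z2 : finType) (phi1 : outv K Y -> Z1) (phi2 : outv K Y -> Z2) y y' :
  (letterwise (fun u => (phi1 u, phi2 u)) y == letterwise (fun u => (phi1 u, phi2 u)) y')
  = ((letterwise phi1 y, letterwise phi2 y) == (letterwise phi1 y', letterwise phi2 y')).
Proof.
rewrite xpair_eqE; apply/eqP/andP => [E|[/eqP E1 /eqP E2]].
  have Ejt j t : (phi1 (y j t), phi2 (y j t)) = (phi1 (y' j t), phi2 (y' j t)).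
    by move: (congr1 (fun o : {ffun 'I_M -> {ffun 'I_n -> Z1 * Z2}} => o j t) E); rewrite !ffunE.
  by split; apply/eqP/ffunP => j; apply/ffunP => t; rewrite !ffunE; case: (Ejt j t).
apply/ffunP => j; apply/ffunP => t; rewrite !ffunE.
move: (congr1 (fun o : {ffun 'I_M -> {ffun 'I_n -> Z1}} => o j t) E1).
move: (congr1 (fun o : {ffun 'I_M -> {ffun 'I_n -> Z2}} => o j t) E2).
by rewrite !ffunE => -> ->.
Qed.

Lemma push_chan_n V x (Z : finType) (phi : outv K Y -> Z) a :
  push (chan_n V x) (letterwise phi) a = \prod_j \prod_t push (V j (x j t)) phi (a j t).
Proof.
rewrite /push -sum_chan_n; apply: eq_bigl => y; apply/eqP/forallP => [<- j|ya].
  by apply/forallP => t; rewrite !ffunE.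
by apply/ffunP => j; apply/ffunP => t; rewrite !ffunE; apply/eqP/(forallP (ya j)).
Qed.

Lemma push_chan_letter V x j0 t0 u : is_channel V ->
  push (chan_n V x) (fun y => y j0 t0) u = V j0 (x j0 t0) u.
Proof.
move=> V_ch; pose P j t := if (j == j0) && (t == t0) then pred1 u else predT.
rewrite /push (eq_bigl (fun y => [forall j, [forall t, P j t (y j t)]])); last first.
  move=> y; apply/eqP/forallP => [yu j|/(_ j0)/forallP/(_ t0)]; last by rewrite /P !eqxx => /eqP.
  by apply/forallP => t; rewrite /P; case: andP => // -[/eqP-> /eqP->]; rewrite /= yu.
rewrite (sum_chan_n V x P) (bigD1 j0) //= (bigD1 t0) //= /P !eqxx /= big_pred1_eq.
rewrite big1 => [|t /negbTE->]; last exact: (V_ch _ _).2.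
rewrite big1 ?mulr1 // => j /negbTE jj; apply: big1 => t _.
by rewrite jj; exact: (V_ch _ _).2.
Qed.

Lemma sum_chan_observe V x k (P : pred (obsblock M n Y)) :
  \sum_(y : outblock M n K Y | P (observe k y)) chan_n V x y
  = \sum_(a | P a) \prod_j \prod_t cmarg (V j) k (x j t) (a j t).
Proof.
rewrite (partition_big (observe k) P) //=; apply: eq_bigr => a Pa.
transitivity (push (chan_n V x) (letterwise (fun u => u k)) a); last exact: push_chan_n.
by apply: eq_bigl => y; rewrite andb_idl // => /eqP->.
Qed.

Lemma err_prob_marginals V V' N (enc : 'I_N -> inblock M n X -> R)
    (dec : obsblock M n Y -> 'I_N) i :
  (forall j a b, cmarg (V j) (Some i) a b = cmarg (V' j) (Some i) a b) ->
  err_prob V enc dec i = err_prob V' enc dec i.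
Proof.
move=> Vi; apply: eq_bigr => w _; apply: eq_bigr => x _; rewrite /joint -!mulr_sumr.
rewrite !(sum_chan_observe _ x (Some i) (fun a => dec a != w)); congr (_ * _).
by apply: eq_bigr => a _; apply: eq_bigr => j _; apply: eq_bigr => t _; rewrite Vi.
Qed.

Lemma equivocation_marginals V V' N (enc : 'I_N -> inblock M n X -> R) :
  (forall j a b, cmarg (V j) None a b = cmarg (V' j) None a b) ->
  equivocation V enc = equivocation V' enc.
Proof.
move=> Ve; rewrite /equivocation; congr condEntropy; apply/funext => -[w z] /=.
apply: eq_bigr => x _; rewrite /joint -!mulr_sumr.
rewrite !(sum_chan_observe _ x None (pred1 z)); congr (_ * _).
by apply: eq_bigr => a _; apply: eq_bigr => j _; apply: eq_bigr => t _; rewrite Ve.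
Qed.

End ProductChannel.

Lemma achievable_marginals (R : realType) (M K : nat) (X Y : finType)
    (V V' : 'I_M -> X -> outv K Y -> R) Rt :
  (forall j k x b, cmarg (V j) k x b = cmarg (V' j) k x b) ->
  achievable V Rt -> achievable V' Rt.
Proof.
move=> VV' V_ach eps eps_gt0.
have [n [n_gt0 [enc [dec [enc_pmf [err eqv]]]]]] := V_ach eps eps_gt0.
exists n; split => //; exists enc, dec; split => //; split => [i|].
  by rewrite -(err_prob_marginals _ _ (fun j => VV' j (Some i))).
by rewrite -(equivocation_marginals _ (fun j => VV' j None)).
Qed.

(** * Single-letterization of the converse *)

Section SingleLetter.
Variables (R : realType) (K : nat) (X Y : finType).
Variables (p : X -> R) (V : X -> outv K Y -> R) (i : 'I_K).

Local Notation out_pair := (fun u : outv K Y => (u (Some i), u None)).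

Lemma joint_jE a b c : joint_j p V i (a, b, c) = p a * push (V a) out_pair (b, c).
Proof. by congr (_ * _); apply: eq_bigl => u; rewrite xpair_eqE. Qed.

Lemma expect_joint_j (G : X * Y * Y -> R) :
  \sum_t joint_j p V i t * G t = \sum_a p a * \sum_u V a u * G (a, u (Some i), u None).
Proof.
rewrite sum_triple; apply: eq_bigr => a _.
rewrite (expect_push (V a) out_pair (fun bc => G (a, bc.1, bc.2))) mulr_sumr sum_pair.
by apply: eq_bigr => b _; apply: eq_bigr => c _; rewrite joint_jE mulrA.
Qed.

Hypotheses (p_ge0 : forall a, 0 <= p a) (V_ge0 : forall a u, 0 <= V a u).

Lemma joint_j_ge0 t : 0 <= joint_j p V i t.
Proof. by case: t => [[a b] c]; rewrite joint_jE mulr_ge0 ?push_ge0. Qed.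

Lemma centropy_joint_j_given_in :
  rv_centropy (joint_j p V i) (fun t => t.1.2) (fun t => (t.1.1, t.2))
  = - \sum_t joint_j p V i t * ln (push (V t.1.1) out_pair (t.1.2, t.2) / cmarg V None t.1.1 t.2).
Proof.
rewrite rv_centropyE; first congr (- _); last exact: joint_j_ge0.
apply: eq_expect_supp => [|[[a b] c]]; first exact: joint_j_ge0.
move=> /[dup] q_gt0; rewrite joint_jE => /pmulr_gt0_factors[//||pa_gt0 _].
  exact: push_ge0.
rewrite (push_inj _ (f := fun t => (t.1.2, (t.1.1, t.2)))); last first.
  by move=> [[? ?] ?] [[? ?] ?] [-> -> ->].
rewrite push_fst_snd joint_jE /=; under eq_bigr do rewrite joint_jE.
by rewrite -mulr_sumr sum_push_fst invfM mulrACA mulfV ?gt_eqF // mul1r.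
Qed.

End SingleLetter.

Section Converse.
Variables (R : realType) (M K n N : nat) (X Y : finType).
Variables (V : 'I_M -> X -> outv K Y -> R) (enc : 'I_N -> inblock M n X -> R) (i : 'I_K).
Hypotheses (V_ch : is_channel V) (enc_pmf : forall w, is_pmf (enc w)).
Hypotheses (n_gt0 : (0 < n)%N) (N_gt0 : (0 < N)%N).

Local Notation T := ('I_N * inblock M n X * outblock M n K Y)%type.

Definition code_pmf (t : T) : R := joint V enc t.1.1 t.1.2 t.2.

Definition input_pmf (wx : 'I_N * inblock M n X) : R := N%:R^-1 * enc wx.1 wx.2.

(* The input law of sub-channel [j] averaged over the [n] time slots: the product
   input distribution at which the bound is evaluated. *)
Definition avg_input (j : 'I_M) (a : X) : R :=
  n%:R^-1 * \sum_t0 push input_pmf (fun wx => wx.2 j t0) a.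

Local Notation avg_joint j := (joint_j (avg_input j) (V j) i).

Local Notation msg := (fun t : T => t.1.1).
Local Notation out_i := (fun t : T => observe (Some i) t.2).
Local Notation out_e := (fun t : T => observe None t.2).

Lemma input_pmf_ge0 wx : 0 <= input_pmf wx.
Proof. by rewrite mulr_ge0 ?invr_ge0 // (enc_pmf _).1. Qed.

Lemma input_pmf_sum1 : \sum_wx input_pmf wx = 1.
Proof.
rewrite sum_pair; under eq_bigr do rewrite -mulr_sumr (enc_pmf _).2 mulr1.
by rewrite sumr_const card_ord -[_^-1 *+ _]mulr_natr mulVf // pnatr_eq0 -lt0n.
Qed.

Lemma code_pmfE t : code_pmf t = input_pmf t.1 * chan_n V t.1.2 t.2.
Proof. by []. Qed.

Lemma code_pmf_ge0 t : 0 <= code_pmf t.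
Proof. by rewrite code_pmfE mulr_ge0 ?input_pmf_ge0 ?chan_n_ge0. Qed.

Lemma code_pmf_sum1 : \sum_t code_pmf t = 1.
Proof.
rewrite sum_pair -input_pmf_sum1; apply: eq_bigr => wx _.
by under eq_bigr do rewrite code_pmfE /=; rewrite -mulr_sumr chan_n_sum1 ?mulr1.
Qed.

Lemma push_code_input (U : finType) (h : outblock M n K Y -> U) wx u :
  push code_pmf (fun t => (t.1, h t.2)) (wx, u) = input_pmf wx * push (chan_n V wx.2) h u.
Proof.
rewrite /push big_mkcond sum_pair (bigD1 wx) //= [X in _ + X]big1 ?addr0; last first.
  by move=> wx' /negbTE wx'wx; apply: big1 => y _; rewrite xpair_eqE wx'wx.
rewrite mulr_sumr [RHS]big_mkcond; apply: eq_bigr => y _.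
by rewrite xpair_eqE eqxx; case: ifP; rewrite ?mulr0.
Qed.

Lemma push_input_ge0 (U : finType) (f : 'I_N * inblock M n X -> U) u :
  0 <= push input_pmf f u.
Proof. exact: (push_ge0 (Q := input_pmf) input_pmf_ge0). Qed.

Lemma push_code_ge0 (U : finType) (f : T -> U) u : 0 <= push code_pmf f u.
Proof. exact: (push_ge0 (Q := code_pmf) code_pmf_ge0). Qed.

Lemma avg_input_pmf j : is_pmf (avg_input j).
Proof.
split=> [a|]; first by rewrite mulr_ge0 ?invr_ge0 // sumr_ge0 // => t0 _; apply: push_input_ge0.
rewrite -mulr_sumr exchange_big /=; under eq_bigr do rewrite sum_push input_pmf_sum1.
by rewrite sumr_const card_ord mulVf // pnatr_eq0 -lt0n.
Qed.

Lemma avg_joint_ge0 j t : 0 <= avg_joint j t.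
Proof. by apply: joint_j_ge0 => [a|a u]; [exact: (avg_input_pmf j).1 | exact: (V_ch _ _).1]. Qed.

Lemma equivocation_code : equivocation V enc * ln 2 = rv_centropy code_pmf msg out_e.
Proof.
have E : (fun wz => \sum_x \sum_(y | observe None y == wz.2) joint V enc wz.1 x y)
         = push code_pmf (fun t => (msg t, out_e t)).
  apply/funext => -[w z] /=; rewrite /push [RHS]big_mkcond [RHS]sum_triple (bigD1 w) //=.
  rewrite [X in _ + X]big1 ?addr0; last first.
    by move=> w' /negbTE w'w; do 2 (apply: big1 => ? _); rewrite xpair_eqE w'w.
  apply: eq_bigr => x _; rewrite big_mkcond; apply: eq_bigr => y _.
  by rewrite xpair_eqE eqxx.
rewrite /equivocation E /condEntropy !entropyE => [||wz]; last exact: push_code_ge0.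
  rewrite -mulrBl divfK ?gt_eqF ?ln2_gt0 //; congr (_ - Hln _).
  by apply/funext => z; rewrite sum_push_fst.
by move=> z; apply: sumr_ge0 => w _; apply: push_code_ge0.
Qed.

Lemma err_prob_code dec :
  err_prob V enc dec i = \sum_t code_pmf t * (dec (out_i t) != msg t)%:R.
Proof.
rewrite sum_triple; apply: eq_bigr => w _; apply: eq_bigr => x _.
by rewrite big_mkcond; apply: eq_bigr => y _; case: ifP; rewrite ?mulr1 ?mulr0.
Qed.

Lemma err_prob_ge0 dec : 0 <= err_prob V enc dec i.
Proof. by rewrite err_prob_code sumr_ge0 // => t _; rewrite mulr_ge0 ?code_pmf_ge0. Qed.

Lemma expect_letters (G : 'I_M -> X * Y * Y -> R) :
  \sum_t code_pmf t * (\sum_j \sum_t0 G j (t.1.2 j t0, t.2 j t0 (Some i), t.2 j t0 None))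
  = n%:R * \sum_j \sum_abc avg_joint j abc * G j abc.
Proof.
under eq_bigr do rewrite mulr_sumr; rewrite exchange_big mulr_sumr; apply: eq_bigr => j _.
under eq_bigr do rewrite mulr_sumr; rewrite exchange_big /=.
pose Phi a := \sum_u V j a u * G j (a, u (Some i), u None).
have letter t0 : \sum_t code_pmf t * G j (t.1.2 j t0, t.2 j t0 (Some i), t.2 j t0 None)
               = \sum_a push input_pmf (fun wx => wx.2 j t0) a * Phi a.
  rewrite -expect_push [LHS]sum_pair; apply: eq_bigr => wx _.
  under eq_bigr do rewrite code_pmfE /= -mulrA.
  rewrite -mulr_sumr (expect_push (chan_n V wx.2) (fun y => y j t0)
    (fun u => G j (wx.2 j t0, u (Some i), u None))); congr (_ * _).
  by apply: eq_bigr => u _; rewrite push_chan_letter.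
under eq_bigr do rewrite letter.
rewrite exchange_big expect_joint_j mulr_sumr; apply: eq_bigr => a _.
by rewrite -mulr_suml /avg_input !mulrA mulfV ?mul1r // pnatr_eq0 -lt0n.
Qed.

Lemma code_pmf_gt0_letter t j t0 : 0 < code_pmf t ->
  0 < V j (t.1.2 j t0) (t.2 j t0) /\ 0 < avg_input j (t.1.2 j t0).
Proof.
rewrite code_pmfE => /pmulr_gt0_factors[||in_gt0 ch_gt0].
- exact: input_pmf_ge0.
- exact: chan_n_ge0.
split.
  apply: (prodr_gt0_factor (F := fun t' => V j (t.1.2 j t') (t.2 j t'))) => [t'|].
    exact: (V_ch _ _).1.
  apply: (prodr_gt0_factor (F := fun j => \prod_t' V j (t.1.2 j t') (t.2 j t'))) ch_gt0 => j'.
  by apply: prodr_ge0 => t' _; exact: (V_ch _ _).1.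
rewrite mulr_gt0 ?invr_gt0 ?ltr0n //.
apply: lt_le_trans (push_gt0 (Q := input_pmf) input_pmf_ge0 (fun wx => wx.2 j t0) in_gt0) _.
by rewrite (bigD1 t0) //= lerDl sumr_ge0 // => *; apply: push_input_ge0.
Qed.

Lemma avg_joint_gt0_letter t j t0 : 0 < code_pmf t ->
  0 < avg_joint j (t.1.2 j t0, t.2 j t0 (Some i), t.2 j t0 None).
Proof.
move=> /(code_pmf_gt0_letter j t0)[V_gt0 p_gt0].
by rewrite joint_jE mulr_gt0 // (push_gt0 (V_ch j _).1 (fun u => (u (Some i), u None)) V_gt0).
Qed.

Lemma code_cond_out_given_in t : 0 < code_pmf t ->
  push code_pmf (fun t => (out_i t, (t.1, out_e t))) (out_i t, (t.1, out_e t))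
    / push code_pmf (fun t => (t.1, out_e t)) (t.1, out_e t)
  = \prod_j \prod_t0 (push (V j (t.1.2 j t0)) (fun u => (u (Some i), u None))
                        (t.2 j t0 (Some i), t.2 j t0 None)
                      / cmarg (V j) None (t.1.2 j t0) (t.2 j t0 None)).
Proof.
move=> /[dup] Q_gt0; rewrite code_pmfE => /pmulr_gt0_factors[||in_gt0 _].
- exact: input_pmf_ge0.
- exact: chan_n_ge0.
rewrite (push_relabel _ (g := fun t => (t.1, (out_i t, out_e t))) t); last first.
  by move=> ? ?; rewrite !xpair_eqE andbCA.
rewrite (push_code_input (fun y => (observe (Some i) y, observe None y))).
rewrite (push_code_input (observe None)) invfM mulrACA mulfV ?gt_eqF // mul1r.
rewrite (push_relabel _ (f := fun y => (observe (Some i) y, observe None y))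
  (g := letterwise (fun u => (u (Some i), u None))) t.2); last first.
  by move=> y y'; rewrite letterwise_pair_eq.
rewrite push_chan_n (push_chan_n V t.1.2 (fun u => u None)) -prodf_div.
by apply: eq_bigr => j _; rewrite -prodf_div; apply: eq_bigr => t0 _; rewrite !ffunE.
Qed.

Lemma centropy_out_given_in :
  rv_centropy code_pmf out_i (fun t => (t.1, out_e t))
  = n%:R * \sum_j rv_centropy (avg_joint j) (fun t => t.1.2) (fun t => (t.1.1, t.2)).
Proof.
pose G j (abc : X * Y * Y) := ln (push (V j abc.1.1) (fun u => (u (Some i), u None))
  (abc.1.2, abc.2) / cmarg (V j) None abc.1.1 abc.2).
have ratio_gt0 t j t0 : 0 < code_pmf t ->
    0 < push (V j (t.1.2 j t0)) (fun u => (u (Some i), u None)) (t.2 j t0 (Some i), t.2 j t0 None)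
        / cmarg (V j) None (t.1.2 j t0) (t.2 j t0 None).
  move=> /(code_pmf_gt0_letter j t0)[V_gt0 _].
  by rewrite divr_gt0 // ?(push_gt0 (V_ch j _).1 (fun u => (u (Some i), u None)) V_gt0)
    ?(push_gt0 (V_ch j _).1 (fun u => u None) V_gt0).
rewrite (rv_centropyE code_pmf_ge0).
transitivity (- \sum_t code_pmf t *
  \sum_j \sum_t0 G j (t.1.2 j t0, t.2 j t0 (Some i), t.2 j t0 None)).
  congr (- _).
  apply: (eq_expect_supp (Q := code_pmf)) => [?|t Q_gt0]; first exact: code_pmf_ge0.
  rewrite code_cond_out_given_in // ln_prod => [|j]; last first.
    by apply: prodr_gt0 => t0 _; exact: ratio_gt0.
  by apply: eq_bigr => j _; rewrite ln_prod // => t0; exact: ratio_gt0.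
rewrite expect_letters -mulrN -sumrN; congr (_ * _); apply: eq_bigr => j _.
by rewrite (centropy_joint_j_given_in _ (avg_input_pmf j).1 (fun a => (V_ch j a).1)).
Qed.

Definition letter_cond j (b c : Y) : R :=
  push (avg_joint j) (fun t => (t.1.2, t.2)) (b, c) / push (avg_joint j) snd c.

Lemma centropy_out_le :
  rv_centropy code_pmf out_i out_e
  <= n%:R * \sum_j rv_centropy (avg_joint j) (fun t => t.1.2) snd.
Proof.
pose r (a c : obsblock M n Y) := \prod_j \prod_t0 letter_cond j (a j t0) (c j t0).
have cond_ge0 j b c : 0 <= letter_cond j b c by rewrite divr_ge0 ?(push_ge0 (avg_joint_ge0 j)).
have cond_gt0 t j t0 : 0 < code_pmf t -> 0 < letter_cond j (t.2 j t0 (Some i)) (t.2 j t0 None).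
  move=> /(avg_joint_gt0_letter j t0) q_gt0.
  by rewrite divr_gt0 // ?(push_gt0 (avg_joint_ge0 j) (fun t => (t.1.2, t.2)) q_gt0)
    ?(push_gt0 (avg_joint_ge0 j) snd q_gt0).
apply: le_trans (rv_centropy_le_cross code_pmf_ge0 code_pmf_sum1 (r := r) _ _ _) _.
- by move=> a c; do 2 (apply: prodr_ge0 => ? _).
- move=> c; rewrite (sum_ffun2_prodT (fun j t0 b => letter_cond j b (c j t0))).
  apply: prodr_ile1 => j _; rewrite prodr_ge0 => [|t0 _]; last by rewrite sumr_ge0.
  apply: prodr_ile1 => t0 _; rewrite sumr_ge0 //=.
  by rewrite -mulr_suml sum_push_fst divr_self_le1 ?(push_ge0 (avg_joint_ge0 j)).
- by move=> t Q_gt0; do 2 (apply: prodr_gt0 => ? _); rewrite !ffunE cond_gt0.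
rewrite (eq_expect_supp code_pmf_ge0 (G := fun t =>
  \sum_j \sum_t0 ln (letter_cond j (t.2 j t0 (Some i)) (t.2 j t0 None)))); last first.
  move=> t Q_gt0; rewrite ln_prod => [|j]; last first.
    by apply: prodr_gt0 => t0 _; rewrite !ffunE cond_gt0.
  apply: eq_bigr => j _; rewrite ln_prod => [|t0]; last by rewrite !ffunE cond_gt0.
  by apply: eq_bigr => t0 _; rewrite !ffunE.
rewrite (expect_letters (fun j abc => ln (letter_cond j abc.1.2 abc.2))) -mulrN -sumrN.
rewrite le_eqVlt; apply/orP; left; apply/eqP; congr (_ * _); apply: eq_bigr => j _.
by rewrite (rv_centropyE (avg_joint_ge0 j)).
Qed.

Lemma equivocation_le (dec : obsblock M n Y -> 'I_N) th : 0 < th < 1 ->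
  equivocation V enc * ln 2
  <= n%:R * (\sum_j condMI (avg_joint j)) * ln 2
     - ln (1 - th) + err_prob V enc dec i * ln (N%:R / th).
Proof.
move=> th01.
have fano_i : rv_centropy code_pmf msg out_i
              <= - ln (1 - th) + err_prob V enc dec i * ln (N%:R / th).
  by rewrite err_prob_code mulr_suml; exact: (fano code_pmf_ge0 code_pmf_sum1 msg out_i dec th01).
have drop_e : rv_centropy code_pmf msg (fun t => (out_i t, out_e t))
              <= rv_centropy code_pmf msg out_i.
  exact: (rv_centropy_le_coarsen code_pmf_ge0 code_pmf_sum1 msg (fun t => (out_i t, out_e t)) fst).
have add_input : rv_centropy code_pmf out_i (fun t => (t.1, out_e t))
                 <= rv_centropy code_pmf out_i (fun t => (msg t, out_e t)).
  exact: (rv_centropy_le_coarsen code_pmf_ge0 code_pmf_sum1 out_i (fun t => (t.1, out_e t))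
    (fun c => (c.1.1, c.2))).
have chain :
    rv_centropy code_pmf msg out_e - rv_centropy code_pmf msg (fun t => (out_i t, out_e t))
    = rv_centropy code_pmf out_i out_e - rv_centropy code_pmf out_i (fun t => (msg t, out_e t)).
  exact: rv_centropy_chain.
have single_letter : n%:R * (\sum_j condMI (avg_joint j)) * ln 2
  = n%:R * \sum_j rv_centropy (avg_joint j) (fun t => t.1.2) snd
    - n%:R * \sum_j rv_centropy (avg_joint j) (fun t => t.1.2) (fun t => (t.1.1, t.2)).
  rewrite -mulrA mulr_suml -mulrBr -sumrB; congr (_ * _); apply: eq_bigr => j _.
  exact: condMI_centropy (avg_joint_ge0 j).
rewrite equivocation_code single_letter -centropy_out_given_in.
have := centropy_out_le; lra.
Qed.

End Converse.

Lemma msg_count_bound (R : realType) (n : nat) (Rt : R) :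
  (0 < msg_count n Rt)%N /\ ln (msg_count n Rt)%:R <= ln 2 * (1 + n%:R * Num.max Rt 0).
Proof.
set v := expR (n%:R * Rt * ln 2); set z := Num.ceil v.
have v_gt0 : 0 < v by apply: expR_gt0.
have z_ge : v <= z%:~R by apply: ceil_ge.
have z_gt0 : 0 < z by rewrite -(ltr0z R); apply: lt_le_trans z_ge.
have -> : (msg_count n Rt)%:R = z%:~R :> R by rewrite natr_absz gtr0_norm.
split; first by rewrite absz_gt0 gt_eqF.
have z_lt : z%:~R < v + 1 by have := ceilB1_lt v; rewrite -/z intrD /=; lra.
set E := expR (n%:R * Num.max Rt 0 * ln 2).
have v_le : v <= E.
  by rewrite ler_expR ler_pM2r ?ln2_gt0 // ler_wpM2l // le_max lexx.
have E_ge1 : 1 <= E.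
  by rewrite -expR0 ler_expR !mulr_ge0 ?le_max ?lexx ?orbT // ltW ?ln2_gt0.
rewrite (@le_trans _ _ (ln (2 * E))) //.
  by rewrite ler_ln ?posrE ?mulr_gt0 ?(lt_le_trans ltr01 E_ge1) //; lra.
by rewrite lnM ?posrE ?(lt_le_trans ltr01 E_ge1) // expRK; lra.
Qed.

Lemma code_rate_le (R : realType) (M K n N : nat) (X Y : finType)
    (V : 'I_M -> X -> outv K Y -> R) (enc : 'I_N -> inblock M n X -> R)
    (dec : obsblock M n Y -> 'I_N) (i : 'I_K) (Rt eps th : R) :
  is_channel V -> (forall w, is_pmf (enc w)) -> (0 < n)%N -> (0 < N)%N -> 0 < th < 1 ->
  ln N%:R <= ln 2 * (1 + n%:R * Num.max Rt 0) ->
  err_prob V enc dec i <= eps -> Rt - eps <= n%:R^-1 * equivocation V enc ->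
  Rt - eps <= \sum_j condMI (joint_j (avg_input enc j) (V j) i)
              - log2 (1 - th) + eps * (1 + Num.max Rt 0 - log2 th).
Proof.
move=> V_ch enc_pmf n_gt0 N_gt0 th01 lnN_le err_le eqv_ge.
have /andP[th_gt0 th_lt1] := th01; have ln2_gt0 := @ln2_gt0 R.
set Rp := Num.max Rt 0 in lnN_le *; have Rp_ge0 : 0 <= Rp by rewrite le_max lexx orbT.
have := equivocation_le i V_ch enc_pmf n_gt0 N_gt0 dec th01.
set S := \sum_j _; set Pe := err_prob _ _ _ _; set E := equivocation _ _ => E_le.
have eps_ge0 : 0 <= eps := le_trans (err_prob_ge0 i V_ch enc_pmf dec) err_le.
have E_ge : n%:R * (Rt - eps) * ln 2 <= E * ln 2.
  by rewrite ler_pM2r // -ler_pdivlMl ?ltr0n.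
have lnN_ge0 : 0 <= ln N%:R :> R by rewrite ln_ge0 // ler1n.
have lnth_le0 : ln th <= 0 by rewrite ln_le0 // ltW.
have ln1th_le0 : ln (1 - th) <= 0 by rewrite ln_le0 // gerBl ltW.
have Pe_le : Pe * ln (N%:R / th) <= eps * (ln 2 * (1 + n%:R * Rp) - ln th).
  rewrite ln_div ?posrE ?ltr0n //.
  by apply: ler_pM; [exact: err_prob_ge0 | lra | exact: err_le | lra].
set D := Rt - eps - S - eps * Rp.
have C_ge0 : 0 <= - ln (1 - th) + eps * (ln 2 - ln th) by rewrite addr_ge0 ?mulr_ge0 //; lra.
have nD_le : n%:R * (D * ln 2) <= - ln (1 - th) + eps * (ln 2 - ln th) by rewrite /D; lra.
have D_le : D * ln 2 <= - ln (1 - th) + eps * (ln 2 - ln th).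
  have [|D_gt0] := lerP (D * ln 2) 0; first by lra.
  by apply: le_trans nD_le; rewrite ler_peMl ?ler1n ?ltW.
rewrite /log2 -(ler_pM2r ln2_gt0).
have e1 : ln (1 - th) / ln 2 * ln 2 = ln (1 - th) by rewrite divfK ?gt_eqF.
have e2 : eps * (ln th / ln 2) * ln 2 = eps * ln th by rewrite -mulrA divfK ?gt_eqF.
rewrite /D in D_le; lra.
Qed.

Lemma achievable_rate_le (R : realType) (M K : nat) (X Y : finType)
    (V : 'I_M -> X -> outv K Y -> R) (Rt g : R) :
  is_channel V -> achievable V Rt -> 0 < g ->
  exists2 p : 'I_M -> X -> R, (forall j, is_pmf (p j)) &
    forall i, Rt - g <= \sum_j condMI (joint_j (p j) (V j) i).
Proof.
move=> V_ch V_ach g_gt0.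
set Rp := Num.max Rt 0; have Rp_ge0 : 0 <= Rp by rewrite le_max lexx orbT.
set th := 1 - expR (- (g * ln 2 / 3)).
have th01 : 0 < th < 1 by rewrite subr_gt0 expR_lt1 oppr_lt0 !mulr_gt0 ?ln2_gt0 // gtrBl expR_gt0.
have fano_const : - log2 (1 - th) = g / 3.
  by rewrite /log2 /th opprB addrC subrK expRK -mulNr opprK mulrAC mulfK ?gt_eqF ?ln2_gt0.
set L := - log2 th.
have L_ge0 : 0 <= L.
  rewrite oppr_ge0 /log2 pmulr_lle0 ?invr_gt0 ?ln2_gt0 // ln_le0 // ltW //.
  by case/andP: th01.
set eps := g / (3 * (2 + Rp + L)).
have eps_gt0 : 0 < eps by rewrite divr_gt0 // mulr_gt0 //; lra.
have epsE : eps * (2 + Rp + L) = g / 3.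
  by rewrite /eps invfM mulrA -mulrA mulVf ?mulr1 // gt_eqF //; lra.
have [n [n_gt0 [enc [dec [enc_pmf [err_le eqv_ge]]]]]] := V_ach eps eps_gt0.
have [N_gt0 lnN_le] := msg_count_bound n Rt.
exists (avg_input enc) => [|i]; first exact: avg_input_pmf.
have := code_rate_le V_ch enc_pmf n_gt0 N_gt0 th01 lnN_le (err_le i) eqv_ge.
rewrite -/Rp -/L; lra.
Qed.

Unset Implicit Arguments.

Theorem lemma1 (R : realType) (M K : nat) (X Y : finType)
  (W : 'I_M -> X -> outv K Y -> R) :
  (0 < K)%N ->
  is_channel W ->
  forall P' : 'I_M -> X -> outv K Y -> R,
    same_marginals W P' ->
    (secrecy_capacity W <=
     ereal_sup [set bound_value P' p | p in
                  [set p : 'I_M -> X -> R | forall j, is_pmf (p j)]])%E.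
Proof.
move=> _ _ P' [P'_ch WP']; set S := ereal_sup _.
apply: ge_ereal_sup => _ [Rt Rt_ach <-].
have P'_ach : achievable P' Rt.
  by apply: achievable_marginals Rt_ach => j k a b; rewrite WP'.
apply/lee_addgt0Pr => g g_gt0.
have [p p_pmf Rt_le] := achievable_rate_le P'_ch P'_ach g_gt0.
have p_le : (bound_value P' p <= S)%E by apply: ereal_sup_ubound; exists p.
apply: le_trans (leeD2r _ p_le); rewrite -(subrK g Rt) EFinD leeD2rE //.
by apply: le_bigmin => [|i _]; [exact: leey | rewrite lee_fin].
Qed.
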